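(* Let $g_n := n^{3/2}$ for $n\in\mathbb{N}_0$, and define, for $n\ge 2$, \[ \rho^{(2)}_n := \frac{g_{n-2}-4g_{n-1}+6g_n-4g_{n+1}+g_{n+2}}{g_n} =6-4\Big(1+\tfrac1n\Big)^{3/2}-4\Big(1-\tfrac1n\Big)^{3/2}+\Big(1+\tfrac2n\Big)^{3/2}+\Big(1-\tfrac2n\Big)^{3/2}. \] Then: (i) For all $u\in H_0^2(\mathbb{N}_0)$, \[ \sum_{n=1}^{\infty}\left|(-\Delta u)_n\right|^2\ \ge\ \sum_{n=2}^{\infty}\rho^{(2)}_n|u_n|^2 . \] (ii) (Non-attainability) If $u=\{u_n\}_{n\in\mathbb{N}_0}$ is a complex sequence with $u_0=u_1=0$ such that $\sum_{n=2}^\infty \rho^{(2)}_n|u_n|^2<\infty$ and $\sum_{n=1}^{\infty}|(-\Delta u)_n|^2=\sum_{n=2}^{\infty}\rho^{(2)}_n|u_n|^2$, then $u=0$. (iii) (Optimality near infinity) For every integer $M\ge 2$, \[ \inf_{u\in H_0^M(\mathbb{N}_0)\setminus\{0\}}\frac{\sum_{n=1}^{\infty}|(-\Delta u)_n|^2}{\sum_{n=2}^{\infty}\rho^{(2)}_n|u_n|^2}=1; \] equivalently, for every $M\ge2$ and $\varepsilon>0$ there is a finitely supported nonzero $u\in H_0^M(\mathbb{N}_0)$ with $\sum_{n\ge1}|(-\Delta u)_n|^2<(1+\varepsilon)\sum_{n\ge2}\rho^{(2)}_n|u_n|^2$.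
   Context: For $M\in\mathbb{N}$, $H_0^M(\mathbb{N}_0):=\{u\in\ell^2(\mathbb{N}_0): u_0=\dots=u_{M-1}=0\}$. The discrete Dirichlet Laplacian acts on complex sequences indexed by $\mathbb{N}_0$ by $(-\Delta u)_0=2u_0-u_1$ and $(-\Delta u)_n=-u_{n-1}+2u_n-u_{n+1}$ for $n\in\mathbb{N}$. Note $\rho^{(2)}=((-\Delta)^2 g)/g$ on $n\ge2$. *)

From Stdlib Require Import Reals.
From Coquelicot Require Import Coquelicot.
Open Scope R_scope.

(* g_n = n^{3/2} (written n * sqrt n, which is exact and gives g_0 = 0) *)
Definition g (n : nat) : R := INR n * sqrt (INR n).

(* rho^{(2)}_n = (g_{n-2} - 4 g_{n-1} + 6 g_n - 4 g_{n+1} + g_{n+2}) / g_n ;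
   only used for n >= 2 *)
Definition rho2 (n : nat) : R :=
  (g (n - 2) - 4 * g (n - 1) + 6 * g n - 4 * g (n + 1) + g (n + 2)) / g n.

(* discrete Dirichlet Laplacian: (-Delta u) *)
Definition mlap (u : nat -> C) (n : nat) : C :=
  match n with
  | O => (2 * u 0%nat - u 1%nat)%C
  | S m => (- u m + 2 * u n - u (S n))%C
  end.

Definition inH0 (M : nat) (u : nat -> C) : Prop :=
  ex_series (fun n => (Cmod (u n))^2) /\ (forall n, (n < M)%nat -> u n = 0%C).

Definition lhs_seq (u : nat -> C) (k : nat) : R := (Cmod (mlap u (S k)))^2.
Definition rhs_seq (u : nat -> C) (k : nat) : R :=
  rho2 (S (S k)) * (Cmod (u (S (S k))))^2.

(* The weight g_n = n^(3/2) acts as a ground state.  With h = Δg (backward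
   difference), a = -Δ²h and rho = Δ⁴g / g, one has for every real x and n >= 2
     |(-Δx)_n|² = rho_n x_n² + P_n + Q_n + B_(n+1) - B_n,
     P_n = h_n h_(n+1) (Δx_n / h_n - Δx_(n+1) / h_(n+1))²,
     Q_n = (a_n / h_n) g_n g_(n-1) (x_n / g_n - x_(n-1) / g_(n-1))²,
   a rational identity in the values of x and g.  The signs of the differences of
   s^(3/2), read off from its derivatives through the mean value theorem, make P, Q
   and the boundary terms B (slope_rem, ratio_rem, bdry_term below) nonnegative;
   summing gives (i), applied to the real and imaginary parts.  Equality forces Q = 0, so x_n / g_n is constant and hence 0,
   which is (ii).  For (iii) take x = g·φ with φ = 0 below M, φ = 1 on [M, K] and a
   C¹ parabolic descent to 0 on [K, 3K]: the excess Σ|(-Δx)_n|² - Σ rho_n x_n² stays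
   bounded in K, while Σ rho_n x_n² >= c Σ_(M<n<=K) 1/n diverges. *)

From Stdlib Require Import Reals Lra Lia.
From Coquelicot Require Import Coquelicot.
Open Scope R_scope.

(** * Finite differences and the mean value theorem *)

Definition fdiff (f : R -> R) (x : R) : R := f (x + 1) - f x.

Lemma is_derive_fdiff (f df : R -> R) :
  (forall s, 0 < s -> is_derive f s (df s)) ->
  forall s, 0 < s -> is_derive (fdiff f) s (fdiff df s).
Proof.
  intros Hd s Hs; unfold fdiff.
  apply (is_derive_minus (fun t => f (t + 1)) f); [|now apply Hd].
  rewrite <- (Rmult_1_l (df (s + 1))).
  apply (is_derive_comp f (fun t => t + 1) s (df (s + 1)) 1).
  - apply Hd; lra.
  - auto_derive; [easy | ring].
Qed.

Lemma is_derive_iter_fdiff (k : nat) (f df : R -> R) :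
  (forall s, 0 < s -> is_derive f s (df s)) ->
  forall s, 0 < s -> is_derive (Nat.iter k fdiff f) s (Nat.iter k fdiff df s).
Proof.
  intros Hd; induction k as [|k IH]; [exact Hd|].
  exact (is_derive_fdiff _ _ IH).
Qed.

Lemma fdiff_MVT (f df : R -> R) (x : R) :
  0 < x -> (forall s, 0 < s -> is_derive f s (df s)) ->
  exists c, x <= c <= x + 1 /\ fdiff f x = df c.
Proof.
  intros Hx Hd.
  destruct (MVT_gen f x (x + 1) df) as [c [Hc Heq]];
    rewrite Rmin_left, Rmax_right in * by lra.
  - intros y Hy; apply Hd; lra.
  - intros y Hy; apply continuity_pt_filterlim, (ex_derive_continuous f).
    exists (df y); apply Hd; lra.
  - exists c; split; [lra|]. unfold fdiff; rewrite Heq; ring.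
Qed.

Lemma iter_fdiff_MVT (F : nat -> R -> R) (k : nat) (x : R) :
  0 < x ->
  (forall i s, (i < k)%nat -> 0 < s -> is_derive (F i) s (F (S i) s)) ->
  exists c, x <= c <= x + INR k /\ Nat.iter k fdiff (F 0%nat) x = F k c.
Proof.
  revert F x; induction k as [|k IH]; intros F x Hx Hd.
  - exists x; simpl; split; [lra | easy].
  - destruct (fdiff_MVT (Nat.iter k fdiff (F 0%nat)) (Nat.iter k fdiff (F 1%nat)) x Hx)
      as [c1 [Hc1 E1]].
    { apply is_derive_iter_fdiff; intros s Hs; apply Hd; [lia | easy]. }
    destruct (IH (fun i => F (S i)) c1 ltac:(lra)) as [c [Hc E]].
    { intros i s Hi Hs; apply Hd; [lia | easy]. }
    exists c; rewrite S_INR; split; [lra|]. simpl; rewrite E1; exact E.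
Qed.

Definition fwd (y : nat -> R) (n : nat) : R := y (S n) - y n.

Lemma iter_fdiff_INR (f : R -> R) (k m : nat) :
  Nat.iter k fdiff f (INR m) = Nat.iter k fwd (fun n => f (INR n)) m.
Proof.
  revert m; induction k as [|k IH]; intros m; [easy|].
  simpl; unfold fdiff, fwd; rewrite <- S_INR, !IH; easy.
Qed.

Definition pow32_deriv (i : nat) (s : R) : R :=
  match i with
  | 0 => s * sqrt s
  | 1 => 3 / 2 * sqrt s
  | 2 => 3 / 4 / sqrt s
  | 3 => - (3 / 8) / (s * sqrt s)
  | 4 => 9 / 16 / (s * s * sqrt s)
  | _ => 0
  end.

Lemma is_derive_pow32_deriv (i : nat) (s : R) :
  (i < 4)%nat -> 0 < s -> is_derive (pow32_deriv i) s (pow32_deriv (S i) s).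
Proof.
  intros Hi Hs; assert (Hr : 0 < sqrt s) by (apply sqrt_lt_R0; lra).
  assert (Hss : sqrt s * sqrt s = s) by (apply sqrt_sqrt; lra).
  destruct i as [|[|[|[|i]]]]; try lia; unfold pow32_deriv;
    auto_derive; repeat split; try lra; try nra.
  all: set (r := sqrt s) in *; try rewrite <- Hss; field; lra.
Qed.

Lemma g_fwd_MVT (k m : nat) :
  (k <= 4)%nat -> (1 <= m)%nat ->
  exists c, INR m <= c <= INR m + INR k /\ Nat.iter k fwd g m = pow32_deriv k c.
Proof.
  intros Hk Hm.
  destruct (iter_fdiff_MVT pow32_deriv k (INR m)) as [c [Hc E]].
  - apply lt_0_INR; lia.
  - intros i s Hi Hs; apply is_derive_pow32_deriv; [lia | easy].
  - exists c; split; [easy|]. rewrite <- E, iter_fdiff_INR; easy.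
Qed.

Definition bdiff (x : nat -> R) (n : nat) : R := x n - x (pred n).
Definition lap (x : nat -> R) (n : nat) : R := - x (pred n) + 2 * x n - x (S n).
Definition dg : nat -> R := bdiff g.

Lemma dg_incr_fwd (m : nat) : dg (S (S m)) - dg (S m) = Nat.iter 2 fwd g m.
Proof. simpl; unfold dg, bdiff, fwd; simpl; ring. Qed.

Lemma lap_g_fwd (m : nat) : lap g (S m) = - Nat.iter 2 fwd g m.
Proof. simpl; unfold lap, fwd; simpl; ring. Qed.

Lemma lap_dg_fwd (m : nat) : lap dg (S (S m)) = - Nat.iter 3 fwd g m.
Proof. simpl; unfold lap, dg, bdiff, fwd; simpl; ring. Qed.

Lemma g_pos (n : nat) : (1 <= n)%nat -> 0 < g n.
Proof.
  intros Hn; unfold g; assert (0 < INR n) by (apply lt_0_INR; lia).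
  apply Rmult_lt_0_compat; [easy | now apply sqrt_lt_R0].
Qed.

Lemma rho2_g_fwd (m : nat) : rho2 (S (S m)) * g (S (S m)) = Nat.iter 4 fwd g m.
Proof.
  unfold rho2; replace (S (S m) - 2)%nat with m by lia.
  replace (S (S m) - 1)%nat with (S m) by lia.
  replace (S (S m) + 1)%nat with (S (S (S m))) by lia.
  replace (S (S m) + 2)%nat with (S (S (S (S m)))) by lia.
  simpl; unfold fwd; field; apply Rgt_not_eq, g_pos; lia.
Qed.

Lemma g_small_values :
  g 0 = 0 /\ g 1 = 1 /\ g 2 = 2 * sqrt 2 /\ g 3 = 3 * sqrt 3 /\ g 4 = 8.
Proof.
  unfold g; rewrite INR_0, Rmult_0_l; replace (INR 1) with 1 by easy.
  replace (INR 2) with 2 by (simpl; ring).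
  replace (INR 3) with 3 by (simpl; ring); replace (INR 4) with (2 * 2) by (simpl; ring).
  rewrite sqrt_1, sqrt_square by lra; repeat split; ring.
Qed.

Lemma sqrt2_sqrt3_bounds : 141 / 100 < sqrt 2 < 142 / 100 /\ 173 / 100 < sqrt 3 < 1733 / 1000.
Proof.
  pose proof (sqrt_sqrt 2 ltac:(lra)); pose proof (sqrt_pos 2).
  pose proof (sqrt_sqrt 3 ltac:(lra)); pose proof (sqrt_pos 3).
  repeat split; nra.
Qed.

(* At 0 the mean value argument is unavailable (s^(3/2) is not twice
   differentiable there), so differences involving g 0 are evaluated numerically. *)
Ltac small_g_values :=
  destruct g_small_values as (G0 & G1 & G2 & G3 & G4);
  pose proof sqrt2_sqrt3_bounds; simpl; unfold fwd; rewrite ?G0, ?G1, ?G2, ?G3, ?G4; lra.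

Lemma dg_pos (n : nat) : (1 <= n)%nat -> 0 < dg n.
Proof.
  intros Hn; destruct n as [|[|m]]; [lia | |].
  - change (0 < Nat.iter 1 fwd g 0%nat); small_g_values.
  - change (0 < Nat.iter 1 fwd g (S m)); destruct (g_fwd_MVT 1 (S m)) as [c [Hc ->]]; [lia | lia |].
    pose proof (lt_0_INR (S m) ltac:(lia)); simpl; pose proof (sqrt_lt_R0 c); lra.
Qed.

Lemma dg_le_succ (m : nat) : dg (S m) <= dg (S (S m)).
Proof.
  enough (0 <= Nat.iter 2 fwd g m) by (rewrite <- dg_incr_fwd in H; lra).
  destruct m as [|m]; [small_g_values|].
  destruct (g_fwd_MVT 2 (S m)) as [c [Hc ->]]; [lia | lia |].
  pose proof (lt_0_INR (S m) ltac:(lia)); pose proof (sqrt_lt_R0 c).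
  simpl; apply Rlt_le, Rdiv_lt_0_compat; lra.
Qed.

Lemma lap_dg_pos (m : nat) : 0 < lap dg (S (S m)).
Proof.
  rewrite lap_dg_fwd; enough (Nat.iter 3 fwd g m < 0) by lra.
  destruct m as [|m]; [small_g_values|].
  destruct (g_fwd_MVT 3 (S m)) as [c [Hc ->]]; [lia | lia |].
  pose proof (lt_0_INR (S m) ltac:(lia)); pose proof (sqrt_lt_R0 c).
  simpl; unfold Rdiv; rewrite Ropp_mult_distr_l_reverse.
  apply Ropp_lt_gt_0_contravar, Rmult_lt_0_compat; [lra|].
  apply Rinv_0_lt_compat; nra.
Qed.

Lemma rho2_pos (m : nat) : 0 < rho2 (S (S m)).
Proof.
  pose proof (g_pos (S (S m)) ltac:(lia)).
  enough (0 < rho2 (S (S m)) * g (S (S m))) by nra.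
  rewrite rho2_g_fwd; destruct m as [|m]; [small_g_values|].
  destruct (g_fwd_MVT 4 (S m)) as [c [Hc ->]]; [lia | lia |].
  pose proof (lt_0_INR (S m) ltac:(lia)); pose proof (sqrt_lt_R0 c).
  simpl; apply Rdiv_lt_0_compat; [lra|]. apply Rmult_lt_0_compat; nra.
Qed.

Lemma rho2_sqr_nonneg (x : nat -> R) (k : nat) : 0 <= rho2 (S (S k)) * x (S (S k)) ^ 2.
Proof. apply Rmult_le_pos; [apply Rlt_le, rho2_pos | apply pow2_ge_0]. Qed.

Lemma g_sqr (n : nat) : g n ^ 2 = INR n ^ 3.
Proof.
  unfold g; rewrite Rpow_mult_distr, pow2_sqrt by apply pos_INR; ring.
Qed.

Lemma rho2_g_sqr_lower (m : nat) :
  (1 <= m)%nat -> 9 / 128 / INR (S (S m)) <= rho2 (S (S m)) * g (S (S m)) ^ 2.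
Proof.
  intros Hm; destruct (g_fwd_MVT 4 m) as [c [Hc E]]; [lia | lia |].
  replace (rho2 (S (S m)) * g (S (S m)) ^ 2)
    with (rho2 (S (S m)) * g (S (S m)) * g (S (S m))) by ring.
  rewrite rho2_g_fwd, E; unfold g; simpl pow32_deriv.
  assert (Hy : INR (S (S m)) = INR m + 2) by (rewrite !S_INR; ring).
  assert (Hm' : 1 <= INR m) by (apply (le_INR 1); lia).
  replace (INR 4) with 4 in Hc by (simpl; ring).
  set (y := INR (S (S m))) in *; set (s := sqrt y); set (t := sqrt c).
  assert (Hs : s * s = y) by (apply sqrt_sqrt; lra).
  assert (Ht : t * t = c) by (apply sqrt_sqrt; lra).
  assert (0 < s) by (apply sqrt_lt_R0; lra); assert (0 < t) by (apply sqrt_lt_R0; lra).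
  assert (Hts : t <= 2 * s) by nra.
  apply Rle_trans with (9 / 16 / (8 * y * y * s) * (y * s)).
  - right; field; lra.
  - apply Rmult_le_compat_r; [nra|]; apply Rmult_le_compat_l; [lra|].
    apply Rinv_le_contravar; [nra|].
    assert (c * c <= 4 * (y * y)) by nra; nra.
Qed.

Lemma dg_sqr_le (m : nat) : (1 <= m)%nat -> dg (S m) ^ 2 <= 9 / 4 * INR (S m).
Proof.
  intros Hm; destruct (g_fwd_MVT 1 m) as [c [Hc E]]; [lia | lia |].
  change (dg (S m)) with (Nat.iter 1 fwd g m); rewrite E; simpl pow32_deriv.
  rewrite Rpow_mult_distr, pow2_sqrt.
  - rewrite S_INR; simpl in Hc; lra.
  - pose proof (pos_INR m); lra.
Qed.

Lemma lap_g_sqr_le (m : nat) : (1 <= m)%nat -> lap g (S m) ^ 2 <= 9 / 16 / INR m.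
Proof.
  intros Hm; destruct (g_fwd_MVT 2 m) as [c [Hc E]]; [lia | lia |].
  assert (Hm' : 0 < INR m) by (apply lt_0_INR; lia).
  rewrite lap_g_fwd, E; simpl pow32_deriv.
  assert (0 < sqrt c) by (apply sqrt_lt_R0; lra).
  replace ((- (3 / 4 / sqrt c)) ^ 2) with (9 / 16 / sqrt c ^ 2) by (field; lra).
  rewrite pow2_sqrt by lra; unfold Rdiv; apply Rmult_le_compat_l; [lra|].
  apply Rinv_le_contravar; lra.
Qed.

Lemma g_step2_sqr_le (n : nat) :
  (1 <= n)%nat -> (g (S (S n)) - g n) ^ 2 <= 9 / 2 * (2 * INR n + 3).
Proof.
  intros Hn; pose proof (dg_sqr_le (S n) ltac:(lia)); pose proof (dg_sqr_le n Hn).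
  replace (g (S (S n)) - g n) with (dg (S (S n)) + dg (S n)) by (unfold dg, bdiff; simpl; ring).
  pose proof (pow2_ge_0 (dg (S (S n)) - dg (S n))); rewrite !S_INR in *; nra.
Qed.

Lemma sum_Sn_R (a : nat -> R) (n : nat) : sum_n a (S n) = sum_n a n + a (S n) :> R.
Proof. exact (sum_Sn a n). Qed.

Lemma sum_n_plus_R (a b : nat -> R) (N : nat) :
  sum_n (fun k => a k + b k) N = sum_n a N + sum_n b N :> R.
Proof. exact (sum_n_plus a b N). Qed.

Lemma sum_n_ge_term (a : nat -> R) (N k : nat) :
  (forall j, 0 <= a j) -> (k <= N)%nat -> a k <= sum_n a N.
Proof.
  intros Ha Hk; rewrite sum_n_Reals; induction N as [|N IH].
  - replace k with 0%nat by lia; simpl; lra.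
  - simpl; pose proof (Ha (S N)); destruct (Nat.eq_dec k (S N)) as [->|Hne].
    + pose proof (cond_pos_sum a N Ha); lra.
    + specialize (IH ltac:(lia)); lra.
Qed.

Lemma sum_n_mono_nonneg (a : nat -> R) (m N : nat) :
  (forall k, 0 <= a k) -> (m <= N)%nat -> sum_n a m <= sum_n a N.
Proof.
  intros Ha Hm; induction Hm as [|N Hm IH]; [lra|].
  rewrite sum_Sn_R; pose proof (Ha (S N)); lra.
Qed.

Lemma sum_n_zero_tail (a : nat -> R) (m N : nat) :
  (forall k, (m < k <= N)%nat -> a k = 0) -> (m <= N)%nat -> sum_n a N = sum_n a m :> R.
Proof.
  intros Ha Hm; induction Hm as [|N Hm IH]; [easy|].
  rewrite sum_Sn_R, IH; [rewrite (Ha (S N)) by lia; ring | intros k Hk; apply Ha; lia].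
Qed.

Lemma sum_n_le_Series (a : nat -> R) (N : nat) :
  (forall k, 0 <= a k) -> ex_series a -> sum_n a N <= Series a.
Proof.
  intros Ha Hex; rewrite sum_n_Reals; apply sum_incr; [|easy].
  apply is_series_Reals, Series_correct, Hex.
Qed.

Lemma is_series_finite_support (a : nat -> R) (N : nat) :
  (forall k, (N < k)%nat -> a k = 0) -> is_series a (sum_n a N).
Proof.
  intros Ha; enough (H : is_lim_seq (sum_n a) (sum_n a N)) by exact H.
  apply (is_lim_seq_ext_loc (fun _ => sum_n a N)); [|apply is_lim_seq_const].
  exists N; intros n Hn; symmetry; apply sum_n_zero_tail; [intros k Hk; apply Ha|]; lia.
Qed.

Lemma sum_n_m_le_loc (a b : nat -> R) (n m : nat) :
  (forall k, (n <= k <= m)%nat -> a k <= b k) -> sum_n_m a n m <= sum_n_m b n m.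
Proof.
  intros Hab; induction m as [|m IH].
  - destruct n as [|n]; [rewrite !sum_n_n; apply Hab; lia | rewrite !sum_n_m_zero by lia; lra].
  - destruct (Nat.le_gt_cases n (S m)) as [Hn|Hn].
    + destruct (Nat.eq_dec n (S m)) as [->|Hne]; [rewrite !sum_n_n; apply Hab; lia|].
      rewrite !sum_n_Sm by lia.
      pose proof (IH ltac:(intros k Hk; apply Hab; lia)); pose proof (Hab (S m) ltac:(lia)).
      change (sum_n_m a n m + a (S m) <= sum_n_m b n m + b (S m)); lra.
    + rewrite !sum_n_m_zero by lia; lra.
Qed.

Lemma sum_n_m_le_sum_n (a : nat -> R) (m m' N : nat) :
  (forall k, 0 <= a k) -> (m' <= N)%nat -> sum_n_m a (S m) m' <= sum_n a N.
Proof.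
  intros Ha HN; destruct (Nat.le_gt_cases m m') as [Hm|Hm].
  - pose proof (sum_n_m_Chasles a 0 m m' ltac:(lia) Hm) as E.
    change (sum_n a m' = sum_n a m + sum_n_m a (S m) m') in E.
    pose proof (sum_n_mono_nonneg a m' N Ha HN).
    assert (0 <= sum_n a m) by (rewrite sum_n_Reals; apply cond_pos_sum, Ha); lra.
  - rewrite sum_n_m_zero by lia.
    assert (0 <= sum_n a N) by (rewrite sum_n_Reals; apply cond_pos_sum, Ha); easy.
Qed.

(** * The ground-state representation *)

Definition slope_rem (x : nat -> R) (n : nat) : R :=
  dg n * dg (S n) * (bdiff x n / dg n - bdiff x (S n) / dg (S n)) ^ 2.
Definition ratio_rem (x : nat -> R) (n : nat) : R :=
  lap dg n / dg n * g n * g (pred n) * (x n / g n - x (pred n) / g (pred n)) ^ 2.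
Definition bdry_term (x : nat -> R) (n : nat) : R :=
  (1 - dg (pred n) / dg n) * bdiff x n ^ 2
  + lap dg n / dg n * (g n / g (pred n) - 1) * x (pred n) ^ 2.

Lemma rho2_lap_dg (m : nat) :
  rho2 (S (S m)) = (lap dg (S (S m)) - lap dg (S (S (S m)))) / g (S (S m)).
Proof.
  pose proof (g_pos (S (S m)) ltac:(lia)).
  apply (Rmult_eq_reg_r (g (S (S m)))); [|lra].
  rewrite rho2_g_fwd, !lap_dg_fwd; simpl; unfold fwd; field; lra.
Qed.

Lemma lap_sqr_ground_state (x : nat -> R) (m : nat) :
  lap x (S (S m)) ^ 2 = rho2 (S (S m)) * x (S (S m)) ^ 2
    + slope_rem x (S (S m)) + ratio_rem x (S (S m))
    + bdry_term x (S (S (S m))) - bdry_term x (S (S m)).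
Proof.
  pose proof (g_pos (S m) ltac:(lia)); pose proof (g_pos (S (S m)) ltac:(lia)).
  pose proof (dg_pos (S m) ltac:(lia)); pose proof (dg_pos (S (S m)) ltac:(lia)).
  pose proof (dg_pos (S (S (S m))) ltac:(lia)).
  rewrite rho2_lap_dg; unfold slope_rem, ratio_rem, bdry_term, lap, bdiff; simpl pred.
  unfold dg, bdiff in *; simpl pred in *.
  field; repeat split; lra.
Qed.

Lemma lap_sqr_ground_state_base (x : nat -> R) :
  x 0%nat = 0 -> x 1%nat = 0 -> lap x 1 ^ 2 = dg 1 / dg 2 * x 2%nat ^ 2 + bdry_term x 2.
Proof.
  intros H0 H1; pose proof (dg_pos 2 ltac:(lia)); pose proof (g_pos 1 ltac:(lia)).
  unfold lap, bdry_term, bdiff; simpl pred; rewrite H0, H1; field; lra.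
Qed.

Lemma sum_lap_sqr_ground_state (x : nat -> R) (N : nat) :
  x 0%nat = 0 -> x 1%nat = 0 ->
  sum_n (fun k => lap x (S k) ^ 2) (S N) =
  sum_n (fun k => rho2 (S (S k)) * x (S (S k)) ^ 2
                  + (slope_rem x (S (S k)) + ratio_rem x (S (S k)))) N
  + dg 1 / dg 2 * x 2%nat ^ 2 + bdry_term x (S (S (S N))) :> R.
Proof.
  intros H0 H1; induction N as [|N IH].
  - rewrite sum_Sn_R, !sum_O, lap_sqr_ground_state_base by easy.
    rewrite lap_sqr_ground_state; ring.
  - rewrite sum_Sn_R, IH, sum_Sn_R, lap_sqr_ground_state; ring.
Qed.

Lemma slope_rem_nonneg (x : nat -> R) (n : nat) : (1 <= n)%nat -> 0 <= slope_rem x n.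
Proof.
  intros Hn; pose proof (dg_pos n Hn); pose proof (dg_pos (S n) ltac:(lia)).
  unfold slope_rem; apply Rmult_le_pos; [nra | apply pow2_ge_0].
Qed.

Lemma ratio_rem_weight_pos (m : nat) :
  0 < lap dg (S (S m)) / dg (S (S m)) * g (S (S m)) * g (S m).
Proof.
  pose proof (lap_dg_pos m); pose proof (dg_pos (S (S m)) ltac:(lia)).
  pose proof (g_pos (S m) ltac:(lia)); pose proof (g_pos (S (S m)) ltac:(lia)).
  assert (0 < lap dg (S (S m)) / dg (S (S m))) by (apply Rdiv_lt_0_compat; lra).
  apply Rmult_lt_0_compat; [apply Rmult_lt_0_compat|]; lra.
Qed.

Lemma ratio_rem_nonneg (x : nat -> R) (m : nat) : 0 <= ratio_rem x (S (S m)).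
Proof.
  pose proof (ratio_rem_weight_pos m).
  unfold ratio_rem; apply Rmult_le_pos; [simpl pred; lra | apply pow2_ge_0].
Qed.

Lemma bdry_term_nonneg (x : nat -> R) (m : nat) : 0 <= bdry_term x (S (S m)).
Proof.
  pose proof (dg_pos (S m) ltac:(lia)); pose proof (dg_pos (S (S m)) ltac:(lia)).
  pose proof (dg_le_succ m); pose proof (lap_dg_pos m).
  pose proof (g_pos (S m) ltac:(lia)).
  assert (g (S m) < g (S (S m))) by (unfold dg, bdiff in *; simpl pred in *; lra).
  unfold bdry_term; simpl pred.
  apply Rplus_le_le_0_compat; apply Rmult_le_pos; try apply pow2_ge_0.
  - enough (dg (S m) / dg (S (S m)) <= 1) by lra.
    apply (Rdiv_le_1 (dg (S m))); lra.
  - apply Rmult_le_pos; [apply Rlt_le, Rdiv_lt_0_compat; lra|].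
    enough (1 <= g (S (S m)) / g (S m)) by lra.
    apply Rle_div_r; lra.
Qed.

Lemma sum_sqr_add_ratio_rem (x : nat -> R) (N k : nat) :
  x 0%nat = 0 -> x 1%nat = 0 -> (k <= N)%nat ->
  sum_n (fun j => rho2 (S (S j)) * x (S (S j)) ^ 2) N + ratio_rem x (S (S k))
  <= sum_n (fun j => lap x (S j) ^ 2) (S N).
Proof.
  intros H0 H1 Hk; rewrite sum_lap_sqr_ground_state by easy.
  pose proof (bdry_term_nonneg x (S N)); pose proof (pow2_ge_0 (x 2%nat)).
  assert (0 <= dg 1 / dg 2) by (apply Rlt_le, Rdiv_lt_0_compat; apply dg_pos; lia).
  pose proof (slope_rem_nonneg x (S (S k)) ltac:(lia)).
  rewrite sum_n_plus_R.
  pose proof (sum_n_ge_term (fun j => slope_rem x (S (S j)) + ratio_rem x (S (S j))) N k)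
    as Hterm; cbv beta in Hterm.
  enough (slope_rem x (S (S k)) + ratio_rem x (S (S k))
          <= sum_n (fun j => slope_rem x (S (S j)) + ratio_rem x (S (S j))) N) by nra.
  apply Hterm; [|easy]; intros j.
  pose proof (slope_rem_nonneg x (S (S j)) ltac:(lia)); pose proof (ratio_rem_nonneg x j); lra.
Qed.

(** * The inequality and its equality case *)

Lemma lhs_seq_re_im (u : nat -> C) (k : nat) :
  lhs_seq u k = lap (fun n => Re (u n)) (S k) ^ 2 + lap (fun n => Im (u n)) (S k) ^ 2.
Proof. unfold lhs_seq; rewrite Cmod2_alt; unfold mlap, lap, Re, Im; simpl; ring. Qed.

Lemma rhs_seq_re_im (u : nat -> C) (k : nat) :
  rhs_seq u k = rho2 (S (S k)) * Re (u (S (S k))) ^ 2 + rho2 (S (S k)) * Im (u (S (S k))) ^ 2.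
Proof. unfold rhs_seq; rewrite Cmod2_alt; ring. Qed.

Lemma lhs_seq_nonneg (u : nat -> C) (k : nat) : 0 <= lhs_seq u k.
Proof. apply pow2_ge_0. Qed.

Lemma rhs_seq_nonneg (u : nat -> C) (k : nat) : 0 <= rhs_seq u k.
Proof. apply (rho2_sqr_nonneg (fun n => Cmod (u n))). Qed.

Lemma sum_rhs_seq_add_ratio_rem (u : nat -> C) (N k : nat) :
  u 0%nat = 0%C -> u 1%nat = 0%C -> (k <= N)%nat ->
  sum_n (rhs_seq u) N
    + (ratio_rem (fun n => Re (u n)) (S (S k)) + ratio_rem (fun n => Im (u n)) (S (S k)))
  <= sum_n (lhs_seq u) (S N).
Proof.
  intros H0 H1 Hk.
  rewrite (sum_n_ext _ _ _ (lhs_seq_re_im u)), (sum_n_ext _ _ _ (rhs_seq_re_im u)), !sum_n_plus_R.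
  pose proof (sum_sqr_add_ratio_rem (fun n => Re (u n)) N k) as Hre.
  pose proof (sum_sqr_add_ratio_rem (fun n => Im (u n)) N k) as Him.
  cbv beta in Hre, Him; rewrite H0, H1 in Hre, Him.
  specialize (Hre eq_refl eq_refl Hk); specialize (Him eq_refl eq_refl Hk).
  lra.
Qed.

Lemma sqr_sub3_le (a b c : R) : (a - b - c) ^ 2 <= 3 * (a ^ 2 + b ^ 2 + c ^ 2).
Proof.
  pose proof (pow2_ge_0 (a + b)); pose proof (pow2_ge_0 (a + c)); pose proof (pow2_ge_0 (b - c)).
  nra.
Qed.

Lemma lap_sqr_le (x : nat -> R) (k : nat) :
  lap x (S k) ^ 2 <= 3 * (x k ^ 2 + 4 * x (S k) ^ 2 + x (S (S k)) ^ 2).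
Proof.
  unfold lap; simpl pred.
  replace (- x k + 2 * x (S k) - x (S (S k))) with (2 * x (S k) - x k - x (S (S k))) by ring.
  pose proof (sqr_sub3_le (2 * x (S k)) (x k) (x (S (S k)))); lra.
Qed.

Lemma ex_series_lhs_seq (u : nat -> C) :
  ex_series (fun n => Cmod (u n) ^ 2) -> ex_series (lhs_seq u).
Proof.
  intros Hu; set (c := fun n => Cmod (u n) ^ 2) in Hu.
  apply (ex_series_le (V := R_CompleteNormedModule) _
           (fun k => 3 * (c k + 4 * c (S k) + c (S (S k))))).
  - intros k; change (Rabs (lhs_seq u k) <= 3 * (c k + 4 * c (S k) + c (S (S k)))).
    rewrite Rabs_pos_eq by apply lhs_seq_nonneg.
    rewrite lhs_seq_re_im; unfold c; rewrite !Cmod2_alt.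
    pose proof (lap_sqr_le (fun n => Re (u n)) k); pose proof (lap_sqr_le (fun n => Im (u n)) k).
    cbv beta in *; lra.
  - apply (ex_series_scal_l (V := R_NormedModule)), (ex_series_plus (V := R_NormedModule)).
    + apply (ex_series_plus (V := R_NormedModule)); [easy|].
      now apply (ex_series_scal_l (V := R_NormedModule)), (ex_series_incr_1 c).
    + now apply (ex_series_incr_1 (fun k => c (S k))), (ex_series_incr_1 c).
Qed.

Lemma rellich_series (u : nat -> C) :
  u 0%nat = 0%C -> u 1%nat = 0%C -> ex_series (lhs_seq u) ->
  ex_series (rhs_seq u) /\ Series (rhs_seq u) <= Series (lhs_seq u).
Proof.
  intros H0 H1 Hl.
  assert (Hb : forall N, sum_n (rhs_seq u) N <= Series (lhs_seq u)).
  { intros N; pose proof (sum_rhs_seq_add_ratio_rem u N 0 H0 H1 ltac:(lia)).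
    pose proof (ratio_rem_nonneg (fun n => Re (u n)) 0).
    pose proof (ratio_rem_nonneg (fun n => Im (u n)) 0).
    pose proof (sum_n_le_Series (lhs_seq u) (S N) (lhs_seq_nonneg u) Hl); lra. }
  assert (Hr : ex_series (rhs_seq u)).
  { destruct (ex_finite_lim_seq_incr (sum_n (rhs_seq u)) (Series (lhs_seq u))) as [l Hlim].
    - intros n; rewrite sum_Sn_R; pose proof (rhs_seq_nonneg u (S n)); lra.
    - exact Hb.
    - now exists l. }
  split; [exact Hr|].
  apply (is_lim_seq_le (sum_n (rhs_seq u)) (fun _ => Series (lhs_seq u))
           (Series (rhs_seq u)) (Series (lhs_seq u))); [exact Hb| |].
  - apply Series_correct, Hr.
  - apply is_lim_seq_const.
Qed.

Lemma rellich_inequality (u : nat -> C) :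
  inH0 2 u -> Series (lhs_seq u) >= Series (rhs_seq u).
Proof.
  intros [Hl2 Hzero].
  destruct (rellich_series u (Hzero 0%nat ltac:(lia)) (Hzero 1%nat ltac:(lia)))
    as [_ Hle]; [now apply ex_series_lhs_seq | lra].
Qed.

Lemma ratio_rem_zero_eq (x : nat -> R) (m : nat) :
  ratio_rem x (S (S m)) = 0 -> x (S (S m)) / g (S (S m)) = x (S m) / g (S m).
Proof.
  intros H; pose proof (ratio_rem_weight_pos m); unfold ratio_rem in H; simpl pred in H.
  apply Rmult_integral in H as [H|H]; [lra|].
  rewrite <- Rsqr_pow2 in H; apply Rsqr_0_uniq in H; lra.
Qed.

Lemma ratio_rem_zero_vanish (x : nat -> R) :
  x 1%nat = 0 -> (forall m, ratio_rem x (S (S m)) = 0) -> forall n, x (S n) = 0.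
Proof.
  intros H1 HQ n; induction n as [|n IH]; [exact H1|].
  pose proof (ratio_rem_zero_eq x n (HQ n)) as E; rewrite IH in E.
  pose proof (g_pos (S (S n)) ltac:(lia)).
  apply (Rmult_eq_reg_r (/ g (S (S n)))); [|apply Rinv_neq_0_compat; lra].
  unfold Rdiv in E; lra.
Qed.

Lemma rellich_equality_zero (u : nat -> C) :
  u 0%nat = 0%C -> u 1%nat = 0%C -> ex_series (rhs_seq u) ->
  is_series (lhs_seq u) (Series (rhs_seq u)) -> forall n, u n = 0%C.
Proof.
  intros H0 H1 Hr Hl.
  set (x := fun n => Re (u n)); set (y := fun n => Im (u n)).
  assert (Hgap : is_lim_seq (fun N => sum_n (lhs_seq u) (S N) - sum_n (rhs_seq u) N) 0).
  { assert (HL : is_lim_seq (sum_n (lhs_seq u)) (Series (rhs_seq u))) by exact Hl.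
    assert (HR : is_lim_seq (sum_n (rhs_seq u)) (Series (rhs_seq u)))
      by exact (Series_correct _ Hr).
    replace 0 with (Series (rhs_seq u) - Series (rhs_seq u)) by ring.
    apply is_lim_seq_minus'; [exact (proj1 (is_lim_seq_incr_1 _ _) HL) | exact HR]. }
  assert (HQ : forall m, ratio_rem x (S (S m)) = 0 /\ ratio_rem y (S (S m)) = 0).
  { intros m; pose proof (ratio_rem_nonneg x m); pose proof (ratio_rem_nonneg y m).
    enough (ratio_rem x (S (S m)) + ratio_rem y (S (S m)) <= 0) by lra.
    refine (is_lim_seq_le_loc (fun _ => ratio_rem x (S (S m)) + ratio_rem y (S (S m))) _ _ 0 _
             (is_lim_seq_const _) Hgap).
    exists m; intros N HN; pose proof (sum_rhs_seq_add_ratio_rem u N m H0 H1 HN).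
    unfold x, y; lra. }
  assert (Hx : forall n, x (S n) = 0)
    by (apply ratio_rem_zero_vanish; [unfold x; now rewrite H1 | apply HQ]).
  assert (Hy : forall n, y (S n) = 0)
    by (apply ratio_rem_zero_vanish; [unfold y; now rewrite H1 | apply HQ]).
  intros [|n]; [exact H0|].
  specialize (Hx n); specialize (Hy n); unfold x, y in *.
  destruct (u (S n)) as [a b]; simpl in Hx, Hy; now subst.
Qed.

(** * Optimality: cut-off ground states *)

Lemma sqr_le_of_Rabs_le (a c : R) : Rabs a <= c -> a ^ 2 <= c ^ 2.
Proof. intros H; rewrite <- pow2_abs; apply pow_incr; split; [apply Rabs_pos | easy]. Qed.

Lemma sqr_mul_le (a b A B : R) : a ^ 2 <= A -> b ^ 2 <= B -> (a * b) ^ 2 <= A * B.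
Proof.
  intros Ha Hb; rewrite Rpow_mult_distr.
  apply Rmult_le_compat; [apply pow2_ge_0 | apply pow2_ge_0 | easy | easy].
Qed.

Lemma bdry_term_g (m : nat) :
  bdry_term g (S (S m)) = dg (S (S m)) * (dg (S (S m)) - dg (S m)) + lap dg (S (S m)) * g (S m).
Proof.
  pose proof (dg_pos (S (S m)) ltac:(lia)); pose proof (g_pos (S m) ltac:(lia)).
  unfold bdry_term; fold dg; simpl pred.
  replace (g (S (S m))) with (g (S m) + dg (S (S m))) by (unfold dg, bdiff; simpl; ring).
  field; lra.
Qed.

Lemma dg_mul_dg_incr_le (m : nat) : dg (S (S (S m))) * (dg (S (S (S m))) - dg (S (S m))) <= 2.
Proof.
  destruct (g_fwd_MVT 2 (S m)) as [c [Hc E]]; [lia | lia |].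
  rewrite <- dg_incr_fwd in E; rewrite S_INR in Hc; simpl in Hc; pose proof (pos_INR m).
  assert (0 < sqrt c) by (apply sqrt_lt_R0; lra).
  assert (Hb2 : (dg (S (S (S m))) - dg (S (S m))) ^ 2 = 9 / 16 / c)
    by (rewrite E; simpl pow32_deriv; rewrite <- (pow2_sqrt c) at 2 by lra; field; lra).
  pose proof (dg_sqr_le (S (S m)) ltac:(lia)) as Ha2; rewrite !S_INR in Ha2.
  pose proof (sqr_mul_le _ _ _ _ Ha2 (Req_le _ _ Hb2)) as Hab.
  assert (9 / 4 * (INR m + 1 + 1 + 1) * (9 / 16 / c) <= 4).
  { replace (9 / 4 * (INR m + 1 + 1 + 1) * (9 / 16 / c))
      with (81 / 64 * (INR m + 1 + 1 + 1) / c) by (field; lra).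
    apply Rle_div_l; lra. }
  pose proof (dg_pos (S (S (S m))) ltac:(lia)); pose proof (dg_le_succ (S m)).
  assert (0 <= dg (S (S (S m))) * (dg (S (S (S m))) - dg (S (S m)))) by nra.
  nra.
Qed.

Lemma lap_dg_mul_g_le (m : nat) : lap dg (S (S (S m))) * g (S (S m)) <= 2.
Proof.
  destruct (g_fwd_MVT 3 (S m)) as [d [Hd E]]; [lia | lia |].
  rewrite S_INR in Hd; simpl in Hd; pose proof (pos_INR m).
  assert (0 < sqrt d) by (apply sqrt_lt_R0; lra).
  assert (He2 : lap dg (S (S (S m))) ^ 2 = 9 / 64 / (d * d * d)).
  { rewrite lap_dg_fwd, E; simpl pow32_deriv.
    replace ((- (- (3 / 8) / (d * sqrt d))) ^ 2) with (9 / 64 / (d * d * sqrt d ^ 2))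
      by (field; nra).
    rewrite pow2_sqrt by lra; field; lra. }
  pose proof (g_sqr (S (S m))) as Hh2; rewrite !S_INR in Hh2.
  pose proof (sqr_mul_le _ _ _ _ (Req_le _ _ He2) (Req_le _ _ Hh2)) as Heh.
  assert (9 / 64 / (d * d * d) * (INR m + 1 + 1) ^ 3 <= 4).
  { assert ((INR m + 1 + 1) ^ 3 <= (2 * d) ^ 3) by (apply pow_incr; lra).
    replace (9 / 64 / (d * d * d) * (INR m + 1 + 1) ^ 3)
      with (9 / 64 * (INR m + 1 + 1) ^ 3 / (d * d * d)) by (field; nra).
    apply Rle_div_l; [nra|]; simpl in *; nra. }
  pose proof (lap_dg_pos (S m)); pose proof (g_pos (S (S m)) ltac:(lia)).
  assert (0 <= lap dg (S (S (S m))) * g (S (S m))) by nra.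
  nra.
Qed.

Lemma bdry_term_g_le (m : nat) : bdry_term g (S (S (S m))) <= 4.
Proof.
  rewrite bdry_term_g; pose proof (dg_mul_dg_incr_le m); pose proof (lap_dg_mul_g_le m); lra.
Qed.

(* 2K^2 on [0, K], then two parabolic arcs with vertices at K and 3K meeting with equal
   slopes at 2K, so first and second differences are O(K) and O(1) uniformly. *)
Definition ramp (K n : nat) : R :=
  if (n <=? K)%nat then 2 * INR K ^ 2
  else if (n <=? 2 * K)%nat then 2 * INR K ^ 2 - (INR n - INR K) ^ 2
  else if (n <=? 3 * K)%nat then (3 * INR K - INR n) ^ 2
  else 0.

Ltac ramp_cases :=
  unfold ramp;
  repeat match goal with |- context [(?a <=? ?b)%nat] => destruct (Nat.leb_spec a b) end;
  try lia;
  repeat match goal with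
  | H : (?a < ?b)%nat |- _ => change (S a <= b)%nat in H
  end;
  repeat match goal with
  | H : (?a <= ?b)%nat |- _ => apply le_INR in H
  end;
  rewrite ?S_INR, ?mult_INR in *; simpl INR in *.

Lemma ramp_range (K n : nat) : 0 <= ramp K n <= 2 * INR K ^ 2.
Proof. pose proof (pos_INR K); pose proof (pos_INR n); ramp_cases; split; nra. Qed.

Lemma ramp_fwd_le (K n : nat) : Rabs (ramp K (S n) - ramp K n) <= 2 * INR K.
Proof. pose proof (pos_INR K); pose proof (pos_INR n); ramp_cases; apply Rabs_le; split; nra. Qed.

Lemma ramp_fwd2_le (K n : nat) :
  (1 <= K)%nat -> Rabs (ramp K (S (S n)) - 2 * ramp K (S n) + ramp K n) <= 2.
Proof. intros HK; pose proof (pos_INR n); ramp_cases; apply Rabs_le; split; nra. Qed.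

Definition cutoff (M K n : nat) : R := if (n <? M)%nat then 0 else ramp K n / (2 * INR K ^ 2).
Definition trunc_g (M n : nat) : R := if (n <? M)%nat then 0 else g n.
Definition cutoff_g (M K n : nat) : R := g n * cutoff M K n.

Lemma cutoff_g_eq_trunc_g (M K n : nat) :
  (1 <= K)%nat -> (n <= K)%nat -> cutoff_g M K n = trunc_g M n.
Proof.
  intros HK Hn; pose proof (lt_0_INR K ltac:(lia)).
  unfold cutoff_g, cutoff, trunc_g, ramp; destruct (n <? M)%nat; [ring|].
  destruct (Nat.leb_spec n K); [field; lra | lia].
Qed.

Lemma cutoff_beyond (M K n : nat) : (1 <= K)%nat -> (3 * K <= n)%nat -> cutoff M K n = 0.
Proof.
  intros HK Hn; unfold cutoff, ramp; destruct (n <? M)%nat; [easy|].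
  destruct (Nat.leb_spec n K); [lia|]; destruct (Nat.leb_spec n (2 * K)); [lia|].
  destruct (Nat.leb_spec n (3 * K)).
  - replace n with (3 * K)%nat by lia; rewrite mult_INR; simpl INR.
    replace (3 * INR K - (1 + 1 + 1) * INR K) with 0 by ring; unfold Rdiv; ring.
  - unfold Rdiv; ring.
Qed.

Lemma cutoff_g_beyond (M K n : nat) : (1 <= K)%nat -> (3 * K <= n)%nat -> cutoff_g M K n = 0.
Proof. intros HK Hn; unfold cutoff_g; rewrite cutoff_beyond by easy; ring. Qed.

Lemma cutoff_g_below (M K n : nat) : (n < M)%nat -> cutoff_g M K n = 0.
Proof. intros Hn; unfold cutoff_g, cutoff; destruct (Nat.ltb_spec n M); [ring | lia]. Qed.

Lemma cutoff_range (M K n : nat) : (1 <= K)%nat -> 0 <= cutoff M K n <= 1.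
Proof.
  intros HK; pose proof (lt_0_INR K ltac:(lia)); pose proof (ramp_range K n).
  unfold cutoff; destruct (n <? M)%nat; [lra|].
  split; [apply Rdiv_le_0_compat; nra | apply (Rdiv_le_1 (ramp K n)); nra].
Qed.

Lemma cutoff_fwd_le (M K n : nat) :
  (1 <= K)%nat -> (M <= n)%nat -> Rabs (cutoff M K (S n) - cutoff M K n) <= / INR K.
Proof.
  intros HK Hn; pose proof (lt_0_INR K ltac:(lia)); pose proof (ramp_fwd_le K n).
  unfold cutoff; destruct (Nat.ltb_spec (S n) M); [lia|]; destruct (Nat.ltb_spec n M); [lia|].
  replace (ramp K (S n) / (2 * INR K ^ 2) - ramp K n / (2 * INR K ^ 2))
    with ((ramp K (S n) - ramp K n) / (2 * INR K ^ 2)) by (field; lra).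
  rewrite Rabs_div, (Rabs_pos_eq (2 * INR K ^ 2)) by nra.
  apply Rle_div_l; [nra|]; replace (/ INR K * (2 * INR K ^ 2)) with (2 * INR K) by (field; lra).
  easy.
Qed.

Lemma cutoff_fwd2_le (M K n : nat) :
  (1 <= K)%nat -> (M <= n)%nat ->
  Rabs (cutoff M K (S (S n)) - 2 * cutoff M K (S n) + cutoff M K n) <= / INR K ^ 2.
Proof.
  intros HK Hn; pose proof (lt_0_INR K ltac:(lia)); pose proof (ramp_fwd2_le K n HK).
  unfold cutoff; destruct (Nat.ltb_spec (S (S n)) M); [lia|].
  destruct (Nat.ltb_spec (S n) M); [lia|]; destruct (Nat.ltb_spec n M); [lia|].
  replace (ramp K (S (S n)) / (2 * INR K ^ 2) - 2 * (ramp K (S n) / (2 * INR K ^ 2))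
           + ramp K n / (2 * INR K ^ 2))
    with ((ramp K (S (S n)) - 2 * ramp K (S n) + ramp K n) / (2 * INR K ^ 2)) by (field; lra).
  rewrite Rabs_div, (Rabs_pos_eq (2 * INR K ^ 2)) by nra.
  apply Rle_div_l; [nra|]; replace (/ INR K ^ 2 * (2 * INR K ^ 2)) with 2 by (field; lra).
  easy.
Qed.

Lemma lap_mult (y b : nat -> R) (n : nat) :
  lap (fun j => y j * b j) (S n) =
  b (S n) * lap y (S n) - y (S (S n)) * (b (S (S n)) - 2 * b (S n) + b n)
  - (y (S (S n)) - y n) * (b (S n) - b n).
Proof. unfold lap; simpl pred; ring. Qed.

Lemma lap_cutoff_g_sqr_le (M K n : nat) :
  (3 <= K)%nat -> (M <= n)%nat -> (K <= S n)%nat -> (n <= 3 * K)%nat ->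
  lap (cutoff_g M K) (S n) ^ 2 <= 300 / INR K.
Proof.
  intros HK HMn HKn HnK; unfold cutoff_g; rewrite lap_mult.
  assert (Hk : INR 3 <= INR K) by (apply le_INR; lia).
  assert (Hn1 : INR K <= INR (S n)) by (apply le_INR; lia).
  assert (Hn2 : INR n <= INR (3 * K)) by (apply le_INR; lia).
  rewrite S_INR, mult_INR in *; simpl in Hk, Hn2.
  pose proof (cutoff_range M K (S n) ltac:(lia)) as Hb.
  pose proof (sqr_le_of_Rabs_le _ _ (cutoff_fwd_le M K n ltac:(lia) HMn)) as Hd1.
  pose proof (sqr_le_of_Rabs_le _ _ (cutoff_fwd2_le M K n ltac:(lia) HMn)) as Hd2.
  set (b := cutoff M K) in *; set (k := INR K) in *; set (t := INR n) in *.
  assert (T1 : (b (S n) * lap g (S n)) ^ 2 <= 1 / k).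
  { eapply Rle_trans; [apply (sqr_mul_le _ _ 1 (9 / 16 / t)); [nra | apply lap_g_sqr_le; lia]|].
    replace (1 * (9 / 16 / t)) with (/ (16 / 9 * t)) by (field; lra).
    replace (1 / k) with (/ k) by (field; lra).
    apply Rinv_le_contravar; lra. }
  assert (T2 : (g (S (S n)) * (b (S (S n)) - 2 * b (S n) + b n)) ^ 2 <= 64 / k).
  { eapply Rle_trans; [apply (sqr_mul_le _ _ ((4 * k) ^ 3) ((/ k ^ 2) ^ 2)); [|easy]|].
    - rewrite g_sqr, !S_INR; apply pow_incr; fold t; pose proof (pos_INR n); lra.
    - right; field; lra. }
  assert (T3 : ((g (S (S n)) - g n) * (b (S n) - b n)) ^ 2 <= 32 / k).
  { eapply Rle_trans; [apply (sqr_mul_le _ _ (32 * k) ((/ k) ^ 2)); [|easy]|].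
    - eapply Rle_trans; [apply g_step2_sqr_le; lia | fold t; lra].
    - right; field; lra. }
  pose proof (sqr_sub3_le (b (S n) * lap g (S n)) (g (S (S n)) * (b (S (S n)) - 2 * b (S n) + b n))
    ((g (S (S n)) - g n) * (b (S n) - b n))).
  assert (0 < / k) by (apply Rinv_0_lt_compat; lra); unfold Rdiv in *; lra.
Qed.

Lemma slope_rem_local (x y : nat -> R) (n : nat) :
  (forall j, (pred n <= j <= S n)%nat -> x j = y j) -> slope_rem x n = slope_rem y n.
Proof. intros H; unfold slope_rem, bdiff; rewrite !H by lia; easy. Qed.

Lemma ratio_rem_local (x y : nat -> R) (n : nat) :
  (forall j, (pred n <= j <= n)%nat -> x j = y j) -> ratio_rem x n = ratio_rem y n.
Proof. intros H; unfold ratio_rem; rewrite !H by lia; easy. Qed.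

Lemma bdry_term_local (x y : nat -> R) (n : nat) :
  (forall j, (pred n <= j <= n)%nat -> x j = y j) -> bdry_term x n = bdry_term y n.
Proof. intros H; unfold bdry_term, bdiff; rewrite !H by lia; easy. Qed.

Lemma slope_rem_g (n : nat) : (1 <= n)%nat -> slope_rem g n = 0.
Proof.
  intros Hn; pose proof (dg_pos n Hn); pose proof (dg_pos (S n) ltac:(lia)).
  unfold slope_rem; fold dg; replace (dg n / dg n - dg (S n) / dg (S n)) with 0 by (field; lra).
  ring.
Qed.

Lemma ratio_rem_g (m : nat) : ratio_rem g (S (S m)) = 0.
Proof.
  pose proof (g_pos (S m) ltac:(lia)); pose proof (g_pos (S (S m)) ltac:(lia)).
  unfold ratio_rem; simpl pred.
  replace (g (S (S m)) / g (S (S m)) - g (S m) / g (S m)) with 0 by (field; lra); ring.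
Qed.

Lemma trunc_g_eq_g (M n : nat) : (M <= n)%nat -> trunc_g M n = g n.
Proof. intros Hn; unfold trunc_g; destruct (Nat.ltb_spec n M); [lia | easy]. Qed.

Definition head_excess (M : nat) : R :=
  sum_n (fun k => slope_rem (trunc_g M) (S (S k)) + ratio_rem (trunc_g M) (S (S k))) M
  + dg 1 / dg 2 * trunc_g M 2 ^ 2.

Lemma cutoff_g_head_excess (M N : nat) :
  (2 <= M)%nat -> (M <= N)%nat ->
  sum_n (fun k => lap (cutoff_g M (N + 3)) (S k) ^ 2) (S N)
  <= sum_n (fun k => rho2 (S (S k)) * cutoff_g M (N + 3) (S (S k)) ^ 2) N + head_excess M + 4.
Proof.
  intros HM HN; rewrite sum_lap_sqr_ground_state by (apply cutoff_g_below; lia).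
  set (x := cutoff_g M (N + 3)).
  assert (Hx : forall j, (j <= N + 3)%nat -> x j = trunc_g M j)
    by (intros j Hj; apply cutoff_g_eq_trunc_g; lia).
  rewrite sum_n_plus_R, (sum_n_ext_loc
    (fun k => slope_rem x (S (S k)) + ratio_rem x (S (S k)))
    (fun k => slope_rem (trunc_g M) (S (S k)) + ratio_rem (trunc_g M) (S (S k)))).
  2:{ intros k Hk; rewrite (slope_rem_local x (trunc_g M)), (ratio_rem_local x (trunc_g M));
      [easy | |]; intros j Hj; apply Hx; lia. }
  rewrite (sum_n_zero_tail
    (fun k => slope_rem (trunc_g M) (S (S k)) + ratio_rem (trunc_g M) (S (S k))) M N); [| | easy].
  2:{ intros k Hk; rewrite (slope_rem_local _ g), (ratio_rem_local _ g), slope_rem_g, ratio_rem_g;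
      [ring | lia | |]; intros j Hj; apply trunc_g_eq_g; simpl in Hj; lia. }
  rewrite (bdry_term_local x g).
  2:{ intros j Hj; rewrite Hx, trunc_g_eq_g by (simpl in Hj; lia); easy. }
  pose proof (bdry_term_g_le N); rewrite Hx by lia; unfold head_excess; lra.
Qed.

Lemma cutoff_g_tail_le (M N : nat) :
  (M <= N)%nat ->
  sum_n_m (fun k => lap (cutoff_g M (N + 3)) (S k) ^ 2) (S (S N)) (3 * (N + 3)) <= 900.
Proof.
  intros HN.
  assert (HK : 3 <= INR (N + 3)) by (rewrite plus_INR; simpl; pose proof (pos_INR N); lra).
  apply Rle_trans with (sum_n_m (fun _ => 300 / INR (N + 3)) (S (S N)) (3 * (N + 3))).
  - apply sum_n_m_le_loc; intros k Hk; apply lap_cutoff_g_sqr_le; lia.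
  - rewrite sum_n_m_const.
    replace (S (3 * (N + 3)) - S (S N))%nat with (2 * (N + 3) + 2)%nat by lia.
    rewrite plus_INR, mult_INR; simpl INR; set (k := INR (N + 3)) in *.
    replace (((1 + 1) * k + (1 + 1)) * (300 / k)) with (600 + 600 / k) by (field; lra).
    enough (600 / k <= 300) by lra.
    apply Rle_div_l; lra.
Qed.

Lemma cutoff_g_excess (M N : nat) :
  (2 <= M)%nat -> (M <= N)%nat ->
  sum_n (fun k => lap (cutoff_g M (N + 3)) (S k) ^ 2) (3 * (N + 3))
  <= sum_n (fun k => rho2 (S (S k)) * cutoff_g M (N + 3) (S (S k)) ^ 2) (3 * (N + 3))
     + (head_excess M + 904).
Proof.
  intros HM HN.
  pose proof (cutoff_g_head_excess M N HM HN); pose proof (cutoff_g_tail_le M N HN).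
  pose proof (sum_n_mono_nonneg (fun k => rho2 (S (S k)) * cutoff_g M (N + 3) (S (S k)) ^ 2)
    N (3 * (N + 3)) (rho2_sqr_nonneg _) ltac:(lia)).
  set (f := fun k => lap (cutoff_g M (N + 3)) (S k) ^ 2) in *.
  pose proof (sum_n_m_Chasles f 0 (S N) (3 * (N + 3)) ltac:(lia) ltac:(lia)) as E.
  change (sum_n f (3 * (N + 3)) = sum_n f (S N) + sum_n_m f (S (S N)) (3 * (N + 3))) in E.
  lra.
Qed.

Lemma harmonic_block (B : nat) : (1 <= B)%nat -> 1 / 2 <= sum_n_m (fun n => / INR n) B (2 * B - 1).
Proof.
  intros HB; pose proof (lt_0_INR B ltac:(lia)).
  apply Rle_trans with (sum_n_m (fun _ => / (2 * INR B)) B (2 * B - 1)).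
  - rewrite sum_n_m_const; replace (S (2 * B - 1) - B)%nat with B by lia.
    right; field; lra.
  - apply sum_n_m_le_loc; intros k Hk; apply Rinv_le_contravar.
    + apply lt_0_INR; lia.
    + replace (2 * INR B) with (INR (2 * B)) by (rewrite mult_INR; easy).
      apply le_INR; lia.
Qed.

Lemma harmonic_doubling (A j : nat) :
  (1 <= A)%nat -> INR j / 2 <= sum_n_m (fun n => / INR n) A (2 ^ j * A - 1).
Proof.
  intros HA; induction j as [|j IH].
  - rewrite sum_n_m_zero by (simpl; lia); change (INR 0 / 2 <= 0); simpl; lra.
  - assert (Hp : (1 <= 2 ^ j)%nat) by (apply Nat.le_succ_l, Nat.neq_0_lt_0, Nat.pow_nonzero; lia).
    rewrite (sum_n_m_Chasles _ A (2 ^ j * A - 1)) by (simpl; nia).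
    replace (S (2 ^ j * A - 1)) with (2 ^ j * A)%nat by nia.
    replace (2 ^ S j * A - 1)%nat with (2 * (2 ^ j * A) - 1)%nat by (simpl; nia).
    pose proof (harmonic_block (2 ^ j * A) ltac:(nia)).
    rewrite S_INR; change (plus ?a ?b) with (a + b); lra.
Qed.

Lemma cutoff_g_rhs_ge (M N j : nat) :
  (2 <= M)%nat -> (2 ^ j * (M + 1) <= N + 3)%nat ->
  9 / 256 * INR j
  <= sum_n (fun k => rho2 (S (S k)) * cutoff_g M (N + 3) (S (S k)) ^ 2) (3 * (N + 3)).
Proof.
  intros HM Hj; set (A := (M + 1)%nat) in *.
  assert (Hp : (1 <= 2 ^ j)%nat) by (apply Nat.le_succ_l, Nat.neq_0_lt_0, Nat.pow_nonzero; lia).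
  eapply Rle_trans;
    [|apply (sum_n_m_le_sum_n _ (M - 2) (2 ^ j * A - 3)); [apply rho2_sqr_nonneg | lia]].
  apply Rle_trans with (sum_n_m (fun k => 9 / 128 * / INR (S (S k))) (S (M - 2)) (2 ^ j * A - 3)).
  - rewrite (sum_n_m_mult_l (K := R_Ring) (9 / 128) (fun k => / INR (S (S k)))).
    rewrite (sum_n_m_S (fun k => / INR (S k))), (sum_n_m_S (fun k => / INR k)).
    replace (S (S (S (M - 2)))) with A by lia.
    replace (S (S (2 ^ j * A - 3))) with (2 ^ j * A - 1)%nat by nia.
    pose proof (harmonic_doubling A j ltac:(lia)); change (mult ?a ?b) with (a * b); lra.
  - apply sum_n_m_le_loc; intros k Hk.
    rewrite cutoff_g_eq_trunc_g, trunc_g_eq_g by nia.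
    apply rho2_g_sqr_lower; lia.
Qed.

Lemma lhs_seq_RtoC (x : nat -> R) (k : nat) : lhs_seq (fun n => RtoC (x n)) k = lap x (S k) ^ 2.
Proof. rewrite lhs_seq_re_im; unfold lap; simpl; ring. Qed.

Lemma rhs_seq_RtoC (x : nat -> R) (k : nat) :
  rhs_seq (fun n => RtoC (x n)) k = rho2 (S (S k)) * x (S (S k)) ^ 2.
Proof. rewrite rhs_seq_re_im; simpl; ring. Qed.

Lemma Series_cutoff_g (M K : nat) :
  (1 <= K)%nat ->
  Series (lhs_seq (fun n => RtoC (cutoff_g M K n)))
    = sum_n (fun k => lap (cutoff_g M K) (S k) ^ 2) (3 * K) /\
  Series (rhs_seq (fun n => RtoC (cutoff_g M K n)))
    = sum_n (fun k => rho2 (S (S k)) * cutoff_g M K (S (S k)) ^ 2) (3 * K).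
Proof.
  intros HK; rewrite (Series_ext _ _ (lhs_seq_RtoC _)), (Series_ext _ _ (rhs_seq_RtoC _)).
  split; apply is_series_unique, is_series_finite_support; intros k Hk.
  - unfold lap; simpl pred; rewrite !cutoff_g_beyond by lia; ring.
  - rewrite cutoff_g_beyond by lia; ring.
Qed.

Lemma cutoff_g_admissible (M K : nat) :
  (1 <= M <= K)%nat ->
  inH0 M (fun n => RtoC (cutoff_g M K n)) /\ (exists n, RtoC (cutoff_g M K n) <> 0%C).
Proof.
  intros HMK; split; [split|].
  - exists (sum_n (fun n => Cmod (RtoC (cutoff_g M K n)) ^ 2) (3 * K)).
    apply is_series_finite_support; intros k Hk.
    rewrite cutoff_g_beyond, Cmod_0 by lia; ring.
  - intros n Hn; rewrite cutoff_g_below by easy; easy.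
  - exists M; rewrite cutoff_g_eq_trunc_g, trunc_g_eq_g by lia.
    intros H; apply (f_equal fst) in H; simpl in H.
    pose proof (g_pos M ltac:(lia)); lra.
Qed.

Lemma rayleigh_quotient_ge_1 (M : nat) (u : nat -> C) :
  (2 <= M)%nat -> inH0 M u -> (exists n, u n <> 0%C) ->
  1 <= Series (lhs_seq u) / Series (rhs_seq u).
Proof.
  intros HM [Hl2 Hzero] [n Hn].
  assert (HnM : (M <= n)%nat)
    by (destruct (Nat.le_gt_cases M n); [easy | exfalso; apply Hn, Hzero; lia]).
  destruct (rellich_series u (Hzero 0%nat ltac:(lia)) (Hzero 1%nat ltac:(lia)))
    as [Hr Hle]; [now apply ex_series_lhs_seq|].
  destruct n as [|[|k]]; [lia | lia|].
  assert (0 < rhs_seq u k).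
  { apply Rmult_lt_0_compat; [apply rho2_pos | apply pow_lt, Cmod_gt_0, Hn]. }
  pose proof (sum_n_le_Series (rhs_seq u) k (rhs_seq_nonneg u) Hr).
  pose proof (sum_n_ge_term (rhs_seq u) k k (rhs_seq_nonneg u) (le_n k)).
  apply Rle_div_r; lra.
Qed.

Lemma rayleigh_quotient_near_1 (M : nat) (eps : R) :
  (2 <= M)%nat -> 0 < eps ->
  exists u : nat -> C, inH0 M u /\ (exists n, u n <> 0%C) /\
    Series (lhs_seq u) / Series (rhs_seq u) <= 1 + eps.
Proof.
  intros HM Heps; set (E := head_excess M + 904).
  destruct (INR_unbounded (256 / 9 * Rmax 1 (E / eps))) as [j Hj].
  assert (Hj1 : (1 <= j)%nat).
  { destruct j; [|lia]. simpl in Hj; pose proof (Rmax_l 1 (E / eps)); lra. }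
  assert (Hp : (2 <= 2 ^ j)%nat)
    by (destruct j; [lia | simpl; pose proof (Nat.pow_nonzero 2 j ltac:(lia)); lia]).
  set (N := (2 ^ j * (M + 1) - 3)%nat).
  assert (HNK : (2 ^ j * (M + 1) = N + 3)%nat) by (unfold N; nia).
  destruct (cutoff_g_admissible M (N + 3) ltac:(nia)) as [Hu Hnz].
  exists (fun n => RtoC (cutoff_g M (N + 3) n)); split; [easy | split; [easy|]].
  destruct (Series_cutoff_g M (N + 3) ltac:(lia)) as [-> ->].
  pose proof (cutoff_g_excess M N HM ltac:(nia)) as Hexc; fold E in Hexc.
  pose proof (cutoff_g_rhs_ge M N j HM ltac:(lia)) as Hrhs.
  set (Rr := sum_n (fun k => rho2 (S (S k)) * cutoff_g M (N + 3) (S (S k)) ^ 2) (3 * (N + 3)))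
    in Hexc, Hrhs |- *.
  assert (HE : E <= eps * Rr).
  { pose proof (Rmax_r 1 (E / eps)); assert (E / eps <= Rr) by lra.
    replace E with (E / eps * eps) by (field; lra).
    rewrite (Rmult_comm eps); apply Rmult_le_compat_r; lra. }
  pose proof (Rmax_l 1 (E / eps)).
  apply Rle_div_l; nra.
Qed.

Theorem theorem1p1 :
  (* (i) Rellich-type inequality on H_0^2 *)
  (forall u : nat -> C, inH0 2 u ->
     Series (lhs_seq u) >= Series (rhs_seq u)) /\
  (* (ii) non-attainability *)
  (forall u : nat -> C, u 0%nat = 0%C -> u 1%nat = 0%C ->
     ex_series (rhs_seq u) ->
     is_series (lhs_seq u) (Series (rhs_seq u)) ->
     forall n, u n = 0%C) /\
  (* (iii) optimality near infinity *)
  (forall M : nat, (2 <= M)%nat ->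
     Glb_Rbar (fun r : R => exists u : nat -> C,
                 inH0 M u /\ (exists n, u n <> 0%C) /\
                 r = Series (lhs_seq u) / Series (rhs_seq u))
     = Finite 1).
Proof.
  split; [exact rellich_inequality | split; [exact rellich_equality_zero |]].
  intros M HM; apply is_glb_Rbar_unique; split.
  - intros r (u & Hu & Hnz & ->); exact (rayleigh_quotient_ge_1 M u HM Hu Hnz).
  - intros [b| |] Hb; simpl; [| | easy].
    + destruct (Rle_lt_dec b 1) as [Hle|Hlt]; [easy|].
      destruct (rayleigh_quotient_near_1 M ((b - 1) / 2) HM ltac:(lra)) as (u & Hu & Hnz & Hq).
      specialize (Hb _ (ex_intro _ u (conj Hu (conj Hnz eq_refl)))); simpl in Hb; lra.
    + destruct (rayleigh_quotient_near_1 M 1 HM ltac:(lra)) as (u & Hu & Hnz & _).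
      exact (Hb _ (ex_intro _ u (conj Hu (conj Hnz eq_refl)))).
Qed.
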